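(* Let $n,m$ be integers with $2\le n\le m$ and $(n,m)\ne(2,4)$. Then $$\gamma^{LD}(K_n\square K_m)-1\le \gamma^{LD}(K_n\times K_m)\le \gamma^{LD}(K_n\square K_m).$$ Moreover, if $\gamma^{LD}(K_n\times K_m)=\gamma^{LD}(K_n\square K_m)-1$, then an optimal (minimum-cardinality) locating-dominating code $C$ in $K_n\times K_m$ has a non-codeword $v$ such that $I(K_n\times K_m, C;v)=C$.
   Context: $K_q$ is the complete graph on vertex set $\{1,\dots,q\}$. The Cartesian product $G_1\square G_2$ has vertex set $V_1\times V_2$, with $(u_1,u_2)$ adjacent to $(v_1,v_2)$ iff ($u_1=v_1$ and $u_2v_2\in E_2$) or ($u_2=v_2$ and $u_1v_1\in E_1$). The direct product $G_1\times G_2$ has vertex set $V_1\times V_2$, with $(u_1,u_2)$ adjacent to $(v_1,v_2)$ iff $u_1v_1\in E_1$ and $u_2v_2\in E_2$. For a graph $G$, a vertex $v$ and a code (nonempty vertex subset) $C$, $I(G,C;v)=N[v]\cap C$ where $N[v]$ is the closed neighbourhood in $G$. A code $C$ is locating-dominating in $G$ if for all distinct non-codewords $u,v$, $I(C;u)\ne\emptyset$ and $I(C;u)\ne I(C;v)$. $\gamma^{LD}(G)$ is the minimum size of a locating-dominating code in $G$. *)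

From mathcomp Require Import all_boot.
Set Implicit Arguments. Unset Strict Implicit. Unset Printing Implicit Defensive.

Definition Kadj (q : nat) : rel 'I_q := fun u v => u != v.

Definition cartesian (T1 T2 : finType) (e1 : rel T1) (e2 : rel T2)
  : rel (T1 * T2) :=
  fun u v => ((u.1 == v.1) && e2 u.2 v.2) || ((u.2 == v.2) && e1 u.1 v.1).

Definition direct (T1 T2 : finType) (e1 : rel T1) (e2 : rel T2)
  : rel (T1 * T2) :=
  fun u v => e1 u.1 v.1 && e2 u.2 v.2.

Definition closed_nbhd (T : finType) (e : rel T) (v : T) : {set T} :=
  [set u | (u == v) || e v u].

Definition Iset (T : finType) (e : rel T) (C : {set T}) (v : T) : {set T} :=
  closed_nbhd e v :&: C.

Definition is_LD (T : finType) (e : rel T) (C : {set T}) : bool :=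
  [&& C != set0,
      [forall u, (u \notin C) ==> (Iset e C u != set0)] &
      [forall u, forall v,
         [&& u \notin C, v \notin C & u != v] ==> (Iset e C u != Iset e C v)]].

Definition gammaLD (T : finType) (e : rel T) : nat :=
  \big[minn/#|T|]_(C : {set T} | is_LD e C) #|C|.

From mathcomp Require Import all_boot.
Set Implicit Arguments. Unset Strict Implicit. Unset Printing Implicit Defensive.

(* In K_n □ K_m the closed neighbourhood of u is its cross N[u] (the row and
   the column of u), while in K_n × K_m it is u together with the complement of
   N[u].  So for a non-codeword u the direct trace I(C;u) is C minus the
   Cartesian trace: a code separates its non-codewords in one product iff it
   does in the other, u is dominated in the direct product iff C is not inside
   N[u], and I(C;u) = C iff the Cartesian trace of u is empty.  Adding to a
   direct code its unique non-codeword with empty Cartesian trace yields a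
   Cartesian code, whence the lower bound; if an optimal direct code has no such
   non-codeword it is itself a Cartesian code, whence the last claim.
   Conversely, a Cartesian code that fails in the direct product lies in the
   cross N[v] of a non-codeword v, and separation forces it to be N[v] minus v
   and at most one further vertex; such a code is traded for an explicit direct
   code of no larger size.  For n = 2 the trade needs m >= 5, the cases m <= 3
   being impossible, which is where (n, m) <> (2, 4) enters. *)

Lemma bigmin_le (I : eqType) (r : seq I) (P : pred I) (F : I -> nat) x0 j :
  j \in r -> P j -> \big[minn/x0]_(i <- r | P i) F i <= F j.
Proof.
elim: r => // i r IHr; rewrite inE big_cons => /predU1P[<- -> | jr Pj].
  exact: geq_minl.
by case: ifP => _; rewrite ?geq_min IHr ?orbT.
Qed.

Lemma exists_ord_notin k (s : seq 'I_k) : size s < k -> exists x, x \notin s.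
Proof.
move=> small_s; apply/existsP; rewrite -negb_forall; apply: contraTN small_s.
move=> /forallP s_full; rewrite -leqNgt -{1}(card_ord k).
by apply: leq_trans (card_size s); apply/subset_leq_card/subsetP => x _; apply: s_full.
Qed.

Lemma mem_ord_uniq k (s : seq 'I_k) : uniq s -> k <= size s -> forall x, x \in s.
Proof.
move=> uniq_s large_s x; apply: contraTT large_s => x_new; rewrite -ltnNge.
have := max_card (mem (x :: s)); rewrite card_ord (card_uniqP _) //=.
by rewrite x_new.
Qed.

Lemma cardsD2 (T : finType) (A : {set T}) x y :
  x \in A -> y \in A -> #|A :\: [set x; y]| = #|A| - (x != y).+1.
Proof.
move=> xA yA; rewrite cardsD (setIidPr _) ?cards2 //.
by apply/subsetP => z; rewrite !inE => /orP[] /eqP ->.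
Qed.

Lemma cardsU1D1 (T : finType) (A : {set T}) x y :
  x \in A -> y \notin A -> #|y |: (A :\ x)| = #|A|.
Proof.
move=> xA yA; rewrite cardsU1 [#|A|](cardsD1 x) xA.
by rewrite in_setD1 (negbTE yA) andbF.
Qed.

Section LocatingDominating.
Variables (T : finType) (e : rel T).
Implicit Types (C D : {set T}) (u w x : T).

Lemma in_Iset C u x : (x \in Iset e C u) = (x \in closed_nbhd e u) && (x \in C).
Proof. exact: in_setI. Qed.

Lemma Iset_eq_at C u w :
  Iset e C u = Iset e C w ->
  forall y, (y \in C) ==> ((y \in closed_nbhd e u) == (y \in closed_nbhd e w)).
Proof. by move/setP=> E y; apply/implyP=> yC; move: (E y); rewrite !in_Iset yC !andbT => ->. Qed.

Lemma IsetI C D w : C \subset D -> Iset e D w :&: C = Iset e C w.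
Proof. by move=> CD; rewrite /Iset -setIA (setIidPr CD). Qed.

Lemma is_LDP C :
  reflect [/\ C != set0, forall u, u \notin C -> Iset e C u != set0
            & forall u w, u \notin C -> w \notin C -> Iset e C u = Iset e C w -> u = w]
          (is_LD e C).
Proof.
apply: (iffP and3P) => [[C0 /forallP dom /forallP sep] | [C0 dom sep]].
  split=> // [u | u w uC wC]; first exact/implyP.
  have /forallP/(_ w)/implyP sep_uw := sep u.
  by apply: contra_eq => uw; apply: sep_uw; rewrite uC wC.
split=> //; first by apply/forallP => u; apply/implyP/dom.
apply/forallP => u; apply/forallP => w; apply/implyP => /and3P[uC wC].
by apply: contraNneq => /sep ->.
Qed.

Lemma is_LD_setT x : is_LD e [set: T].
Proof. by apply/is_LDP; split=> [|u|u w]; rewrite ?inE //; apply/set0Pn; exists x. Qed.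

Lemma gammaLD_le C : is_LD e C -> gammaLD e <= #|C|.
Proof. exact: bigmin_le (mem_index_enum C). Qed.

Lemma gammaLD_attained x : exists2 C, is_LD e C & #|C| = gammaLD e.
Proof.
pose attained k := exists2 C, is_LD e C & #|C| = k.
apply: (big_ind attained) => [|k l Hk Hl|C LD_C]; last by exists C.
- by exists [set: T]; rewrite ?cardsT ?(is_LD_setT x).
- by rewrite /minn; case: ifP.
Qed.

Lemma gammaLD_gt0 x : 0 < gammaLD e.
Proof.
have [C /is_LDP[C0 _ _] <-] := gammaLD_attained x.
by rewrite card_gt0.
Qed.

End LocatingDominating.

Ltac decide_coords :=
  subst; repeat match goal with
  | H : is_true (?x != ?x) |- _ => by rewrite eqxx in H
  | H : is_true (?x != ?y) |- context [?x == ?y] => rewrite (negbTE H)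
  | H : is_true (?x != ?y) |- context [?y == ?x] => rewrite (eq_sym y x) (negbTE H)
  | |- context [?x == ?x] => rewrite eqxx
  | |- context [?x == ?y] =>
      is_var x; is_var y; case: (eqVneq x y) => [?|?]; [subst x|]
  end; by rewrite /=.

Section RookGraphs.
Variables n m : nat.
Local Notation V := ('I_n * 'I_m)%type.
Local Notation KC := (cartesian (@Kadj n) (@Kadj m)).
Local Notation KD := (direct (@Kadj n) (@Kadj m)).
Local Notation cross v := (closed_nbhd KC v).
Implicit Types (C D : {set V}) (u w x : V).

Lemma in_cross u x : (x \in cross u) = (x.1 == u.1) || (x.2 == u.2).
Proof.
case: u x => [u1 u2] [x1 x2]; rewrite inE /cartesian /Kadj xpair_eqE /=.
by rewrite (eq_sym u1) (eq_sym u2); case: (x1 == u1); case: (x2 == u2).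
Qed.

Lemma in_nbhd_direct u x :
  (x \in closed_nbhd KD u) = (x == u) || (x \notin cross u).
Proof.
rewrite in_cross; case: u x => [u1 u2] [x1 x2].
by rewrite inE /direct /Kadj /= negb_or (eq_sym u1) (eq_sym u2).
Qed.

Ltac coords :=
  rewrite ?in_setD1 ?in_setU1 ?in_setD ?in_set2 ?in_set1 ?in_cross ?in_cons ?in_nil ?xpair_eqE /=.

Lemma Iset_direct C u : u \notin C -> Iset KD C u = C :\: Iset KC C u.
Proof.
move=> uC; apply/setP => x; rewrite in_setD !in_Iset in_nbhd_direct.
have [xC | _] := boolP (x \in C); last by rewrite !andbF.
have xu : x != u by apply: contraNneq uC => <-.
by rewrite (negbTE xu) !andbT.
Qed.

Lemma Iset_direct_eq C u w : u \notin C -> w \notin C ->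
  (Iset KD C u == Iset KD C w) = (Iset KC C u == Iset KC C w).
Proof.
move=> uC wC; rewrite !Iset_direct //; apply/eqP/eqP => [E | -> //].
have DK z : C :\: (C :\: Iset KC C z) = Iset KC C z.
  by rewrite setDDr setDv set0U (setIidPr (subsetIr _ _)).
by rewrite -DK E DK.
Qed.

Lemma Iset_direct_eq0 C u : u \notin C -> (Iset KD C u == set0) = (C \subset cross u).
Proof. by move=> uC; rewrite Iset_direct // setD_eq0 subsetI subxx andbT. Qed.

Lemma Iset_direct_eqC C u : u \notin C -> (Iset KD C u == C) = (Iset KC C u == set0).
Proof.
move=> uC; rewrite Iset_direct // (sameP eqP setDidPl) -setI_eq0.
by rewrite (setIidPr (subsetIr _ _)).
Qed.

Lemma is_LD_directP D :
  reflect [/\ D != set0, forall u, u \notin D -> ~~ (D \subset cross u)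
            & forall u w, u \notin D -> w \notin D -> Iset KC D u = Iset KC D w -> u = w]
          (is_LD KD D).
Proof.
apply: (iffP (is_LDP KD D)) => -[D0 dom sep]; split=> // [u uD | u w uD wD].
- by rewrite -Iset_direct_eq0 ?dom.
- by move/eqP; rewrite -Iset_direct_eq // => /eqP; apply: sep.
- by rewrite Iset_direct_eq0 ?dom.
- by move/eqP; rewrite Iset_direct_eq // => /eqP; apply: sep.
Qed.

Lemma is_LD_cartesian_of_direct C :
  is_LD KD C -> (forall u, u \notin C -> Iset KD C u != C) -> is_LD KC C.
Proof.
move=> /is_LD_directP[C0 _ sep] not_full; apply/is_LDP; split=> [//| u uC | //].
by rewrite -Iset_direct_eqC ?not_full.
Qed.

Lemma cartesian_LD_of_direct_LD C :
  is_LD KD C -> exists2 C', is_LD KC C' & #|C'| <= #|C|.+1.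
Proof.
move=> /is_LD_directP[C0 _ sep].
have [u /andP[uC /eqP Iu0] | all_dom] :=
  pickP [pred u | (u \notin C) && (Iset KC C u == set0)]; last first.
  exists C; last exact: leqnSn.
  apply/is_LDP; split=> // u uC.
  by have := all_dom u; rewrite /= uC => /negbT.
have CuC : C \subset u |: C by apply: subsetUr.
exists (u |: C); last by rewrite cardsU1 uC.
apply/is_LDP; split=> [|w | w1 w2].
- by apply/set0Pn; exists u; apply: setU11.
- rewrite in_setU1 negb_or => /andP[wu wC]; apply: contraNneq wu => Iw0.
  apply/eqP/sep => //; rewrite Iu0; apply/eqP; rewrite -subset0 -Iw0.
  exact: setIS.
- rewrite !in_setU1 !negb_or => /andP[_ w1C] /andP[_ w2C] E.
  by apply: sep => //; rewrite -!(IsetI _ _ CuC) E.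
Qed.

(* Two missing vertices on the same line through v have the same trace; on
   different lines, the fourth corner of their rectangle has an empty trace. *)
Lemma cartesian_LD_sub_cross_uniq C v p q :
  is_LD KC C -> C \subset cross v -> v \notin C ->
  p \in cross v :\ v -> q \in cross v :\ v -> p \notin C -> q \notin C -> p = q.
Proof.
move=> /is_LDP[_ dom sep] C_cross vC pv qv pC qC.
have C_fact y : (y \in C) ==> [&& y \in cross v, y != p & y != q].
  apply/implyP => yC; have yp : y != p by apply: contraNneq pC => <-.
  have yq : y != q by apply: contraNneq qC => <-.
  by rewrite yp yq (subsetP C_cross).
move: pv qv pC qC C_fact C_cross; case: v p q {vC} => [v1 v2] [p1 p2] [q1 q2].
coords => pv qv pC qC C_fact C_cross.
have [p1q1 | p1q1] := eqVneq (p1 == v1) (q1 == v1).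
  apply: sep => //; apply/setP => -[y1 y2]; rewrite !in_Iset.
  have := C_fact (y1, y2); case: (_ \in C); rewrite ?andbF ?andbT //.
  by move: p1q1 pv qv; coords; decide_coords.
pose corner := if p1 == v1 then (q1, p2) else (p1, q2).
have corner_C : corner \notin C.
  apply: contra (subsetP C_cross corner) _.
  by move: p1q1 pv qv; rewrite /corner; coords; decide_coords.
have /set0Pn[[y1 y2]] := dom _ corner_C; rewrite in_Iset => /andP[y_corner yC].
have := C_fact (y1, y2); rewrite yC.
by move: y_corner p1q1 pv qv; rewrite /corner; coords; decide_coords.
Qed.

Lemma cartesian_LD_sub_cross C v :
  is_LD KC C -> v \notin C -> C \subset cross v ->
  exists2 p, p \in cross v & C = cross v :\: [set v; p].
Proof.
move=> LD_C vC C_cross.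
have C_sub y : y \in C -> y \in cross v :\ v.
  by move=> yC; rewrite in_setD1 (subsetP C_cross) // andbT; apply: contraNneq vC => <-.
have [p /andP[pC pv] | full] := pickP [pred p | (p \notin C) && (p \in cross v :\ v)].
  exists p; first by move: pv; rewrite in_setD1 => /andP[].
  apply/setP => y; rewrite -setDDl in_setD1.
  have [yC | yC] := boolP (y \in C).
    have yp : y != p by apply: contraNneq pC => <-.
    by rewrite yp C_sub.
  apply/esym/negbTE/andP => -[yp yv]; move: yp.
  by rewrite (cartesian_LD_sub_cross_uniq LD_C C_cross vC yv pv yC pC) eqxx.
exists v; first by rewrite in_cross !eqxx.
rewrite setUid; apply/setP => y; have [yC | yC] := boolP (y \in C); first by rewrite C_sub.
by have := full y; rewrite /= yC /= => ->.
Qed.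

Lemma is_LD_direct_crossD1 (v1 a : 'I_n) (v2 b : 'I_m) :
  a != v1 -> b != v2 -> is_LD KD (cross (v1, v2) :\ (v1, b)).
Proof.
move=> av1 bv2; apply/is_LD_directP; split.
- by apply/set0Pn; exists (v1, v2); coords; decide_coords.
- move=> [u1 u2] uD; apply/subsetPn.
  have [[-> ->] | ub] := eqVneq (u1, u2) (v1, b).
    by exists (a, v2); coords; decide_coords.
  by exists (v1, v2); move: uD ub; coords; decide_coords.
- move=> [u1 u2] [w1 w2] uD wD /Iset_eq_at sep; apply/eqP.
  have := sep (v1, v2); have := sep (u1, v2); have := sep (w1, v2).
  have := sep (v1, u2); have := sep (v1, w2).
  by move: uD wD; clear sep; coords; decide_coords.
Qed.

Lemma is_LD_direct_crossD2 (v1 a r : 'I_n) (v2 b c : 'I_m) :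
  a != v1 -> b != v2 -> r \notin [:: v1; a] -> c \notin [:: v2; b] ->
  is_LD KD (cross (v1, v2) :\: [set (a, v2); (v1, b)]).
Proof.
move=> av1 bv2; rewrite !inE !negb_or => /andP[rv1 ra] /andP[cv2 cb].
apply/is_LD_directP; split.
- by apply/set0Pn; exists (v1, v2); coords; decide_coords.
- move=> [u1 u2] uD; apply/subsetPn.
  have [[-> ->] | ua] := eqVneq (u1, u2) (a, v2).
    by exists (v1, c); coords; decide_coords.
  have [[-> ->] | ub] := eqVneq (u1, u2) (v1, b).
    by exists (r, v2); coords; decide_coords.
  by exists (v1, v2); move: uD ua ub; coords; decide_coords.
- move=> [u1 u2] [w1 w2] uD wD /Iset_eq_at sep; apply/eqP.
  have := sep (v1, v2); have := sep (r, v2); have := sep (v1, c).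
  have := sep (u1, v2); have := sep (w1, v2); have := sep (v1, u2); have := sep (v1, w2).
  by move: uD wD; clear sep; coords; decide_coords.
Qed.

Lemma is_LD_direct_two_rows (v1 a : 'I_n) (v2 b x c1 c2 : 'I_m) :
  (forall r, r \in [:: v1; a]) -> a != v1 -> b != v2 ->
  x \notin [:: v2; b] -> c1 \notin [:: v2; b; x] -> c2 \notin [:: v2; b; x; c1] ->
  is_LD KD ((a, x) |: (cross (v1, v2) :\: [set (v1, v2); (v1, b)] :\ (v1, x))).
Proof.
move=> rows av1 bv2; rewrite !inE !negb_or.
move=> /andP[xv2 xb] /and3P[c1v2 c1b c1x] /and4P[c2v2 c2b c2x c2c1].
apply/is_LD_directP; split.
- by apply/set0Pn; exists (a, x); coords; decide_coords.
- move=> [u1 u2] uD; apply/subsetPn.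
  have [[-> ->] | uv] := eqVneq (u1, u2) (v1, v2).
    by exists (a, x); coords; decide_coords.
  have [[-> ->] | ub] := eqVneq (u1, u2) (v1, b).
    by exists (a, v2); coords; decide_coords.
  have [[-> ->] | ux] := eqVneq (u1, u2) (v1, x).
    by exists (a, v2); coords; decide_coords.
  have [c1u | c1u] := eqVneq c1 u2.
    by exists (v1, c2); move: uD uv ub ux (rows u1); coords; decide_coords.
  by exists (v1, c1); move: uD uv ub ux (rows u1); coords; decide_coords.
- move=> [u1 u2] [w1 w2] uD wD /Iset_eq_at sep; apply/eqP.
  have := sep (a, x); have := sep (a, v2); have := sep (v1, c1); have := sep (v1, c2).
  have := sep (v1, u2); have := sep (v1, w2); have := sep (a, u2); have := sep (a, w2).
  by move: uD wD (rows u1) (rows w1); clear sep; coords; decide_coords.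
Qed.

Lemma not_cartesian_LD_two_rows_row (v1 a : 'I_n) (v2 : 'I_m) :
  (forall r, r \in [:: v1; a]) -> a != v1 ->
  ~~ is_LD KC (cross (v1, v2) :\: [set (v1, v2); (a, v2)]).
Proof.
move=> rows av1; apply/negP => /is_LDP[_ dom _].
have /set0Pn[[y1 y2]] : Iset KC (cross (v1, v2) :\: [set (v1, v2); (a, v2)]) (a, v2) != set0.
  by apply: dom; coords; decide_coords.
by rewrite in_Iset; move: (rows y1); coords; decide_coords.
Qed.

Lemma not_cartesian_LD_two_rows_column (v1 a : 'I_n) (v2 b c : 'I_m) :
  (forall r, r \in [:: v1; a]) -> (forall y, y \in [:: v2; b; c]) ->
  a != v1 -> b != v2 -> c != v2 ->
  ~~ is_LD KC (cross (v1, v2) :\: [set (v1, v2); (v1, b)]).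
Proof.
move=> rows cols av1 bv2 cv2; apply/negP => /is_LDP[_ _ sep].
have /eqP : (v1, v2) != (a, c) by rewrite xpair_eqE eq_sym (negbTE av1).
apply; apply: sep; first by coords; decide_coords.
  by coords; decide_coords.
apply/setP => -[y1 y2]; rewrite !in_Iset.
by move: (rows y1) (cols y2); coords; decide_coords.
Qed.

Lemma direct_LD_of_punctured_cross_two_rows (v1 : 'I_n) (v2 : 'I_m) p :
  1 < n -> n <= 2 -> m != 4 -> p \in cross (v1, v2) -> p != (v1, v2) ->
  is_LD KC (cross (v1, v2) :\: [set (v1, v2); p]) ->
  exists2 D, is_LD KD D & #|D| <= #|cross (v1, v2) :\: [set (v1, v2); p]|.
Proof.
move=> n_gt1 n_le2 m_neq4; case: p => p1 b; rewrite in_cross xpair_eqE /= => p_cross pv LD_C.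
have two_rows a : a != v1 -> forall r, r \in [:: v1; a].
  by move=> av1; apply: mem_ord_uniq; rewrite //= inE andbT eq_sym.
have [p1v1 | p1v1] := eqVneq p1 v1; last first.
  have b_v2 : b = v2 by apply/eqP; move: p_cross; rewrite (negbTE p1v1).
  have := not_cartesian_LD_two_rows_row v2 (two_rows _ p1v1) p1v1.
  by rewrite b_v2 in LD_C; rewrite LD_C.
subst p1; have bv2 : b != v2 by move: pv; rewrite eqxx.
have [a a_new] := exists_ord_notin (s := [:: v1]) n_gt1.
have av1 : a != v1 by move: a_new; rewrite inE.
have [m_gt2 | m_le2] := ltnP 2 m; last first.
  have cols2 y : y \in [:: v2; b] by apply: mem_ord_uniq; rewrite //= inE andbT eq_sym.
  have cols y : y \in [:: v2; b; b] by move: (cols2 y); rewrite !inE orbb.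
  have := not_cartesian_LD_two_rows_column (two_rows _ av1) cols av1 bv2 bv2.
  by rewrite LD_C.
have [x x_new] := exists_ord_notin (s := [:: v2; b]) m_gt2.
have /andP[xv2 xb] : (x != v2) && (x != b) by move: x_new; rewrite !inE negb_or.
have [m_gt3 | m_le3] := ltnP 3 m; last first.
  have cols y : y \in [:: v2; b; x].
    by apply: mem_ord_uniq; rewrite //= !inE !negb_or andbT !(eq_sym _ x) xv2 xb eq_sym bv2.
  have := not_cartesian_LD_two_rows_column (two_rows _ av1) cols av1 bv2 xv2.
  by rewrite LD_C.
have m_gt4 : 4 < m by rewrite ltn_neqAle eq_sym m_neq4.
have [c1 c1_new] := exists_ord_notin (s := [:: v2; b; x]) m_gt3.
have [c2 c2_new] := exists_ord_notin (s := [:: v2; b; x; c1]) m_gt4.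
exists ((a, x) |: (cross (v1, v2) :\: [set (v1, v2); (v1, b)] :\ (v1, x))).
  exact: is_LD_direct_two_rows (two_rows _ av1) av1 bv2 x_new c1_new c2_new.
by rewrite cardsU1D1 //; coords; decide_coords.
Qed.

Lemma direct_LD_of_punctured_cross (v1 : 'I_n) (v2 : 'I_m) p :
  1 < n -> n <= m -> (n, m) <> (2, 4) -> p \in cross (v1, v2) ->
  is_LD KC (cross (v1, v2) :\: [set (v1, v2); p]) ->
  exists2 D, is_LD KD D & #|D| <= #|cross (v1, v2) :\: [set (v1, v2); p]|.
Proof.
move=> n_gt1 n_le_m nm24 p_cross LD_C.
have m_gt1 : 1 < m := leq_trans n_gt1 n_le_m.
have [a a_new] := exists_ord_notin (s := [:: v1]) n_gt1.
have [b b_new] := exists_ord_notin (s := [:: v2]) m_gt1.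
rewrite !inE in a_new b_new.
have cross_v : (v1, v2) \in cross (v1, v2) by rewrite in_cross !eqxx.
have cross_b : (v1, b) \in cross (v1, v2) by rewrite in_cross eqxx.
have cross_a : (a, v2) \in cross (v1, v2) by rewrite in_cross eqxx orbT.
have [-> | pv] := eqVneq p (v1, v2).
  exists (cross (v1, v2) :\ (v1, b)); first exact: is_LD_direct_crossD1 a_new b_new.
  by rewrite cardsD2 // eqxx [#|cross _|](cardsD1 (v1, b)) cross_b add1n subn1.
have [n_gt2 | n_le2] := ltnP 2 n; last first.
  apply: direct_LD_of_punctured_cross_two_rows => //.
  by apply: contra_not_neq nm24 => ->; rewrite (@anti_leq n 2) ?n_le2.
have [r r_new] := exists_ord_notin (s := [:: v1; a]) n_gt2.
have [c c_new] := exists_ord_notin (s := [:: v2; b]) (leq_trans n_gt2 n_le_m).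
exists (cross (v1, v2) :\: [set (a, v2); (v1, b)]).
  exact: is_LD_direct_crossD2 a_new b_new r_new c_new.
by rewrite !cardsD2 // [(v1, v2) == p]eq_sym pv xpair_eqE (negbTE a_new).
Qed.

Lemma direct_LD_of_cartesian_LD C :
  1 < n -> n <= m -> (n, m) <> (2, 4) -> is_LD KC C ->
  exists2 D, is_LD KD D & #|D| <= #|C|.
Proof.
move=> n_gt1 n_le_m nm24 LD_C.
have [[v1 v2] /andP[vC C_cross] | no_v] :=
  pickP [pred v | (v \notin C) && (C \subset cross v)]; last first.
  exists C; last exact: leqnn.
  have /is_LDP[C0 _ sep] := LD_C; apply/is_LD_directP; split=> [//| u uC | //].
  by have := no_v u; rewrite /= uC => /negbT.
have [p p_cross defC] := cartesian_LD_sub_cross LD_C vC C_cross.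
rewrite defC in LD_C *.
exact: direct_LD_of_punctured_cross.
Qed.

End RookGraphs.

Theorem lemma14 (n m : nat) :
  2 <= n -> n <= m -> (n, m) <> (2, 4) ->
  let KnKm_c := cartesian (@Kadj n) (@Kadj m) in
  let KnKm_d := direct (@Kadj n) (@Kadj m) in
  [/\ gammaLD KnKm_c - 1 <= gammaLD KnKm_d,
      gammaLD KnKm_d <= gammaLD KnKm_c
    & gammaLD KnKm_d = gammaLD KnKm_c - 1 ->
      forall C : {set 'I_n * 'I_m},
        is_LD KnKm_d C -> #|C| = gammaLD KnKm_d ->
        exists v, v \notin C /\ Iset KnKm_d C v = C].
Proof.
move=> n_gt1 n_le_m nm24 KC KD.
have x0 : 'I_n * 'I_m := (Ordinal (ltnW n_gt1), Ordinal (leq_trans (ltnW n_gt1) n_le_m)).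
have [Cd LD_Cd card_Cd] := gammaLD_attained KD x0.
have [Cc LD_Cc card_Cc] := gammaLD_attained KC x0.
split.
- have [C LD_C card_C] := cartesian_LD_of_direct_LD LD_Cd.
  by rewrite leq_subLR add1n -card_Cd; apply: leq_trans (gammaLD_le LD_C) card_C.
- have [D LD_D card_D] := direct_LD_of_cartesian_LD n_gt1 n_le_m nm24 LD_Cc.
  by rewrite -card_Cc; apply: leq_trans (gammaLD_le LD_D) card_D.
- move=> gamma_drop C LD_C card_C.
  have [v /andP[vC /eqP full] | not_full] :=
    pickP [pred v | (v \notin C) && (Iset KD C v == C)]; first by exists v.
  have LD_C_cart : is_LD KC C.
    apply: is_LD_cartesian_of_direct LD_C _ => v vC.
    by have := not_full v; rewrite /= vC => /negbT.
  have := gammaLD_le LD_C_cart.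
  by rewrite card_C gamma_drop subn1 leqNgt ltn_predL (gammaLD_gt0 _ x0).
Qed.
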